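(* There is an integer $n_1\ge 1$ such that every graph $H$ with $n\ge n_1$ vertices has geometric pebbling threshold at least $\sqrt{n\log 2}$.
   Context: Pebbling: a distribution on a graph assigns a nonnegative integer number of pebbles to each vertex. A pebbling move removes two pebbles from a vertex having at least two pebbles and adds one pebble to an adjacent vertex. A vertex is pebblable if some sequence of pebbling moves from the distribution ends with at least one pebble on it; a distribution is solvable if every vertex is pebblable. The geometric distribution on $\{0,1,2,\dots\}$ with parameter $0<p\le 1$ assigns probability $p(1-p)^k$ to $k$. For a graph $H$ with $n>0$ vertices, the geometric pebbling threshold of $H$ is the unique positive real $x$ such that, if an independent geometrically distributed number of pebbles with parameter $(1+x/n)^{-1}$ is placed on each vertex of $H$, the probability that the distribution is solvable equals $\tfrac12$. $\log$ is the natural logarithm. *)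

From Stdlib Require Import Reals Lra Arith List Relations.
Import ListNotations.
Open Scope R_scope.

(* A graph on the vertex set {0,...,n-1}: a symmetric irreflexive relation
   on nat; only pairs of vertices < n matter. *)
Definition simple_graph (n : nat) (adj : nat -> nat -> Prop) : Prop :=
  (forall u v, adj u v -> adj v u) /\ (forall u, ~ adj u u).

(* A distribution: number of pebbles on each vertex (values at v >= n are irrelevant). *)
Definition distribution := nat -> nat.

Definition pebbling_move (n : nat) (adj : nat -> nat -> Prop)
    (D D' : distribution) : Prop :=
  exists u v, (u < n)%nat /\ (v < n)%nat /\ adj u v /\ (2 <= D u)%nat /\
    D' = (fun w => if Nat.eqb w u then (D u - 2)%nat
                   else if Nat.eqb w v then S (D v) else D w).

Definition reachable (n : nat) (adj : nat -> nat -> Prop) : relation distribution :=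
  clos_refl_trans distribution (pebbling_move n adj).

Definition pebblable (n : nat) (adj : nat -> nat -> Prop) (D : distribution) (r : nat) : Prop :=
  exists D', reachable n adj D D' /\ (1 <= D' r)%nat.

Definition solvable (n : nat) (adj : nat -> nat -> Prop) (D : distribution) : Prop :=
  forall r, (r < n)%nat -> pebblable n adj D r.

Definition dist_of (l : list nat) : distribution := fun v => nth v l 0%nat.

Fixpoint prodR (k : nat) (f : nat -> R) : R :=
  match k with O => 1 | S k' => prodR k' f * f k' end.

(* probability of the configuration l under independent Geometric(q) pebbles:
   prod_v q (1-q)^(l_v) *)
Definition geom_weight (n : nat) (q : R) (l : list nat) : R :=
  prodR n (fun v => q * (1 - q) ^ (nth v l 0%nat)).

Definition sum_weights (n : nat) (q : R) (L : list (list nat)) : R :=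
  fold_right (fun l acc => geom_weight n q l + acc) 0 L.

(* Sums of probabilities of finitely many distinct solvable configurations.
   The probability of the (countable) event "solvable" is the supremum of this set. *)
Definition solvable_finite_sums (n : nat) (adj : nat -> nat -> Prop) (q : R) : R -> Prop :=
  fun s => exists L : list (list nat),
    NoDup L /\
    Forall (fun l => length l = n /\ solvable n adj (dist_of l)) L /\
    s = sum_weights n q L.

Definition prob_solvable_is (n : nat) (adj : nat -> nat -> Prop) (q p : R) : Prop :=
  is_lub (solvable_finite_sums n adj q) p.

(* x is the geometric pebbling threshold of the graph: x > 0 and with parameter
   (1 + x/n)^{-1} the probability of solvability is 1/2 (the paper shows such x is unique). *)
Definition is_geom_threshold (n : nat) (adj : nat -> nat -> Prop) (x : R) : Prop :=
  0 < x /\ prob_solvable_is n adj (/ (1 + x / INR n)) (1 / 2).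

From Stdlib Require Import Reals Lra Lia List.
Import ListNotations.
Open Scope R_scope.

(* With parameter q a vertex receives k pebbles with probability q(1-q)^k.
   If every vertex holds at most one pebble no pebbling move is possible, so
   such a distribution is solvable only when every vertex holds exactly one
   pebble.  Hence every finite sum of weights of distinct solvable
   configurations is at most
       P(some vertex holds >= 2 pebbles) + P(every vertex holds 1 pebble)
     = 1 - (1 - (1-q)^2)^n + (q(1-q))^n.
   For q = (1 + x/n)^{-1}, 0 < x < sqrt(n log 2) and n >= 16 this is < 1/2,
   by (1-u)^n >= exp(-n u/(1-u)) and the tangent line of exp at -log 2; so a
   threshold x (whose solvability probability is exactly 1/2) is never below
   sqrt(n log 2). *)

(* Total weight of a list of items; [sum_weights] is [sumR (geom_weight n q)]. *)
Definition sumR {A} (w : A -> R) (L : list A) : R :=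
  fold_right (fun l acc => w l + acc) 0 L.

Lemma sumR_app {A} (w : A -> R) L1 L2 : sumR w (L1 ++ L2) = sumR w L1 + sumR w L2.
Proof. induction L1; simpl; [lra | rewrite IHL1; lra]. Qed.

Lemma sumR_flat_map {A B} (w : B -> R) (f : A -> list B) L :
  sumR w (flat_map f L) = sumR (fun a => sumR w (f a)) L.
Proof. induction L; simpl; [lra | rewrite sumR_app, IHL; lra]. Qed.

Lemma sumR_map {A B} (w : B -> R) (f : A -> B) L :
  sumR w (map f L) = sumR (fun a => w (f a)) L.
Proof. induction L; simpl; [lra | rewrite IHL; lra]. Qed.

Lemma sumR_ext_in {A} (w w' : A -> R) L :
  (forall a, In a L -> w a = w' a) -> sumR w L = sumR w' L.
Proof. induction L; simpl; intros H; [lra |]. rewrite H, IHL; auto. Qed.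

Lemma sumR_scale {A} (w : A -> R) c L : sumR (fun a => c * w a) L = c * sumR w L.
Proof. induction L; simpl; [lra | rewrite IHL; lra]. Qed.

Lemma sumR_nonneg {A} (w : A -> R) L : (forall a, 0 <= w a) -> 0 <= sumR w L.
Proof. intros H; induction L; simpl; [lra | specialize (H a); lra]. Qed.

Lemma sumR_filter {A} (w : A -> R) (f : A -> bool) L :
  sumR w L = sumR w (filter f L) + sumR w (filter (fun a => negb (f a)) L).
Proof. induction L; simpl; [lra |]. destruct (f a); simpl; rewrite IHL; lra. Qed.

Lemma sumR_le_incl {A} (w : A -> R) (M : list A) :
  (forall a, 0 <= w a) -> NoDup M -> forall X, incl M X -> sumR w M <= sumR w X.
Proof.
  intros Hw HM. induction HM as [|m M Hm HM IH]; intros X Hincl.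
  - simpl. apply sumR_nonneg; auto.
  - assert (Hin : In m X) by (apply Hincl; left; auto).
    destruct (in_split _ _ Hin) as [X1 [X2 ->]].
    assert (Hrest : incl M (X1 ++ X2)).
    { intros y Hy. assert (Hy' : In y (X1 ++ m :: X2)) by (apply Hincl; right; auto).
      apply in_app_or in Hy'. apply in_or_app. destruct Hy' as [H|[H|H]]; auto.
      subst; contradiction. }
    specialize (IH _ Hrest). rewrite sumR_app in *. simpl. lra.
Qed.

Lemma prodR_ext k f g : (forall v, (v < k)%nat -> f v = g v) -> prodR k f = prodR k g.
Proof. induction k; simpl; intros H; auto. rewrite IHk, H; auto. Qed.

Lemma prodR_const k c : prodR k (fun _ => c) = c ^ k.
Proof. induction k; simpl; auto. rewrite IHk; ring. Qed.

Lemma prodR_nonneg k f : (forall v, 0 <= f v) -> 0 <= prodR k f.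
Proof. intros H; induction k; simpl; [lra | apply Rmult_le_pos; auto]. Qed.

Definition geom_mass (q : R) (a : nat) : R := q * (1 - q) ^ a.

Lemma geom_mass_below q m : sumR (geom_mass q) (seq 0 m) = 1 - (1 - q) ^ m.
Proof.
  induction m; [simpl; lra |].
  rewrite seq_S, sumR_app, IHm. simpl. unfold geom_mass. ring.
Qed.

Lemma pow_unit_interval a k : 0 <= a <= 1 -> 0 <= a ^ k <= 1.
Proof.
  intros Ha. split; [apply pow_le; lra |].
  rewrite <- (pow1 k). apply pow_incr. lra.
Qed.

Lemma geom_weight_nonneg n q l : 0 < q <= 1 -> 0 <= geom_weight n q l.
Proof.
  intros Hq. apply prodR_nonneg. intros v. apply Rmult_le_pos; [lra | apply pow_le; lra].
Qed.

Lemma geom_weight_snoc n q l a : length l = n ->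
  geom_weight (S n) q (l ++ [a]) = geom_weight n q l * geom_mass q a.
Proof.
  intros Hl. unfold geom_weight, geom_mass. simpl. f_equal.
  - apply prodR_ext. intros v Hv. rewrite app_nth1 by lia. auto.
  - rewrite app_nth2 by lia. replace (n - length l)%nat with 0%nat by lia. auto.
Qed.

Fixpoint box (K n : nat) : list (list nat) :=
  match n with
  | O => [[]]
  | S m => flat_map (fun l => map (fun a => l ++ [a]) (seq 0 (S K))) (box K m)
  end.

Lemma in_box K n l :
  In l (box K n) <-> length l = n /\ (forall v, (v < n)%nat -> (nth v l 0 <= K)%nat).
Proof.
  revert l; induction n; intros l; split.
  - intros [<-|[]]; split; auto; intros; lia.
  - intros [Hl _]. destruct l; [left; auto | simpl in Hl; lia].
  - cbn [box]. intros H. apply in_flat_map in H. destruct H as [l' [H1 H2]].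
    apply in_map_iff in H2. destruct H2 as [a [<- Ha]]. apply in_seq in Ha.
    destruct (proj1 (IHn _) H1) as [E B]. rewrite length_app; simpl. split; [lia |].
    intros v Hv. destruct (Nat.lt_ge_cases v (length l')).
    + rewrite app_nth1 by auto. apply B; lia.
    + rewrite app_nth2 by auto. replace (v - length l')%nat with 0%nat by lia. simpl; lia.
  - intros [Hl Hv]. destruct (exists_last (l := l)) as [l' [a ->]].
    { intros ->; simpl in Hl; lia. }
    rewrite length_app in Hl; simpl in Hl.
    cbn [box]. apply in_flat_map. exists l'. split.
    + apply IHn. split; [lia |].
      intros v Hv'. rewrite <- (app_nth1 l' [a]) by lia. apply Hv; lia.
    + apply in_map_iff. exists a; split; auto. apply in_seq.
      specialize (Hv n ltac:(lia)). rewrite app_nth2 in Hv by lia.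
      replace (n - length l')%nat with 0%nat in Hv by lia. simpl in Hv. lia.
Qed.

Lemma NoDup_flat_map_disjoint {A B} (f : A -> list B) L :
  NoDup L -> (forall a, NoDup (f a)) ->
  (forall a a' b, In b (f a) -> In b (f a') -> a = a') -> NoDup (flat_map f L).
Proof.
  intros HL Hf Hd. induction HL; simpl; [constructor |].
  apply NoDup_app; auto. intros b Hb Hb'. apply in_flat_map in Hb'.
  destruct Hb' as [a [Ha Hb']]. rewrite (Hd _ _ _ Hb Hb') in H; contradiction.
Qed.

Lemma box_nodup K n : NoDup (box K n).
Proof.
  induction n; cbn [box]; [repeat constructor; auto |].
  apply NoDup_flat_map_disjoint; auto.
  - intros l. apply NoDup_map_NoDup_ForallPairs; [| apply seq_NoDup].
    intros a b _ _ E. apply app_inj_tail in E. tauto.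
  - intros l l' b H1 H2. apply in_map_iff in H1, H2.
    destruct H1 as [a [<- _]]. destruct H2 as [a' [E _]].
    apply app_inj_tail in E. symmetry; tauto.
Qed.

Lemma box_weight K n q :
  sumR (geom_weight n q) (box K n) = (1 - (1 - q) ^ S K) ^ n.
Proof.
  rewrite <- geom_mass_below. induction n.
  - simpl. unfold geom_weight. simpl. lra.
  - cbn [box]. rewrite sumR_flat_map.
    rewrite (sumR_ext_in _ (fun l => sumR (geom_mass q) (seq 0 (S K)) * geom_weight n q l)).
    + rewrite sumR_scale, IHn. simpl. ring.
    + intros l Hl. rewrite sumR_map. apply in_box in Hl. destruct Hl as [E _].
      rewrite (sumR_ext_in _ (fun a => geom_weight n q l * geom_mass q a)).
      * rewrite sumR_scale. ring.
      * intros a _. apply geom_weight_snoc; auto.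
Qed.

Lemma configurations_bounded (M : list (list nat)) :
  exists K, forall l, In l M -> forall v, (nth v l 0 <= K)%nat.
Proof.
  induction M as [|l M [K HK]].
  - exists 0%nat; intros l [].
  - exists (Nat.max K (list_max l)). intros l' [<-|H] v.
    + destruct (Nat.lt_ge_cases v (length l)) as [Hv|Hv].
      * assert (Hmax : Forall (fun k => (k <= list_max l)%nat) l) by (apply list_max_le; lia).
        rewrite Forall_forall in Hmax. specialize (Hmax _ (nth_In l 0%nat Hv)). lia.
      * rewrite nth_overflow by auto. lia.
    + specialize (HK _ H v). lia.
Qed.

Lemma distinct_weights_le_1 n q M : 0 < q <= 1 -> NoDup M ->
  Forall (fun l => length l = n) M -> sumR (geom_weight n q) M <= 1.
Proof.
  intros Hq HM HF. destruct (configurations_bounded M) as [K HK].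
  apply Rle_trans with (sumR (geom_weight n q) (box K n)).
  - apply sumR_le_incl; auto using geom_weight_nonneg.
    intros l Hl. rewrite Forall_forall in HF. apply in_box; auto.
  - rewrite box_weight. apply pow_unit_interval.
    pose proof (pow_unit_interval (1 - q) (S K) ltac:(lra)). lra.
Qed.

Lemma weight_outside_box n q K M : 0 < q <= 1 -> NoDup M ->
  Forall (fun l => length l = n /\ ~ In l (box K n)) M ->
  sumR (geom_weight n q) M <= 1 - (1 - (1 - q) ^ S K) ^ n.
Proof.
  intros Hq HM HF. rewrite Forall_forall in HF.
  assert (H : sumR (geom_weight n q) (M ++ box K n) <= 1).
  { apply distinct_weights_le_1; auto.
    - apply NoDup_app; auto using box_nodup. intros l Hl. apply HF; auto.
    - apply Forall_forall. intros l Hl. apply in_app_or in Hl. destruct Hl as [Hl|Hl].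
      + apply HF; auto.
      + apply in_box in Hl; tauto. }
  rewrite sumR_app, box_weight in H. lra.
Qed.

(* With at most one pebble per vertex no move applies, so nothing else is reachable. *)
Lemma reachable_from_stuck n adj D1 D2 : reachable n adj D1 D2 ->
  (forall u, (u < n)%nat -> (D1 u <= 1)%nat) -> D2 = D1.
Proof.
  unfold reachable. induction 1 as [D1 D2 Hmove| |D1 D2 D3 _ IH1 _ IH2]; intros Hb; auto.
  - destruct Hmove as [u [v [Hu [_ [_ [H2 _]]]]]]. specialize (Hb u Hu). lia.
  - assert (E : D2 = D1) by auto. subst D2. auto.
Qed.

Lemma solvable_in_box1 n adj l : In l (box 1 n) ->
  solvable n adj (dist_of l) -> l = repeat 1%nat n.
Proof.
  intros Hbox Hs. apply in_box in Hbox. destruct Hbox as [Hl Hb].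
  apply nth_ext with (d := 0%nat) (d' := 1%nat).
  - rewrite repeat_length; auto.
  - intros v Hv. rewrite nth_repeat. rewrite Hl in Hv.
    destruct (Hs v Hv) as [D' [HR H1]].
    rewrite (reachable_from_stuck _ _ _ _ HR Hb) in H1. unfold dist_of in H1.
    specialize (Hb v Hv). lia.
Qed.

Lemma weight_all_ones n q : geom_weight n q (repeat 1%nat n) = (q * (1 - q)) ^ n.
Proof.
  unfold geom_weight. rewrite <- prodR_const. apply prodR_ext. intros v Hv.
  rewrite (nth_indep _ 0%nat 1%nat) by (rewrite repeat_length; auto).
  rewrite nth_repeat. simpl. ring.
Qed.

Lemma solvable_sum_bound n adj q L : 0 < q <= 1 ->
  NoDup L -> Forall (fun l => length l = n /\ solvable n adj (dist_of l)) L ->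
  sum_weights n q L <= 1 - (1 - (1 - q) ^ 2) ^ n + (q * (1 - q)) ^ n.
Proof.
  intros Hq HL HF. rewrite Forall_forall in HF.
  set (outside := fun l : list nat =>
    if in_dec (list_eq_dec Nat.eq_dec) l (box 1 n) then false else true).
  change (sum_weights n q L) with (sumR (geom_weight n q) L).
  rewrite (sumR_filter _ outside).
  assert (Hout : sumR (geom_weight n q) (filter outside L) <= 1 - (1 - (1 - q) ^ 2) ^ n).
  { apply weight_outside_box; auto using NoDup_filter.
    apply Forall_forall. intros l Hl. apply filter_In in Hl. destruct Hl as [Hl Ho].
    split; [apply HF; auto |]. unfold outside in Ho. destruct in_dec; congruence. }
  assert (Hin : sumR (geom_weight n q) (filter (fun l => negb (outside l)) L)
                <= sumR (geom_weight n q) [repeat 1%nat n]).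
  { apply sumR_le_incl; auto using geom_weight_nonneg, NoDup_filter.
    intros l Hl. apply filter_In in Hl. destruct Hl as [Hl Ho]. unfold outside in Ho.
    destruct in_dec as [Hbox|]; [| discriminate]. left. symmetry.
    apply (solvable_in_box1 n adj); auto. apply HF; auto. }
  simpl in Hin. rewrite weight_all_ones in Hin. lra.
Qed.

(* Crude numerical bounds on log 2, from e > 2 and the library bound 1/2 < log 2. *)
Lemma ln2_bounds : / 2 < ln 2 < 1.
Proof.
  split; [exact ln_lt_2 |].
  rewrite <- (ln_exp 1). apply ln_increasing; [lra |].
  pose proof (exp_ineq1 1 ltac:(lra)). lra.
Qed.

Lemma exp_nmul n z : exp (INR n * z) = exp z ^ n.
Proof.
  induction n; [simpl; rewrite Rmult_0_l, exp_0; auto |].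
  rewrite S_INR. simpl pow. rewrite <- IHn, <- exp_plus. f_equal; ring.
Qed.

(* 1 - u >= exp(-u/(1-u)) on [0,1), i.e. 1 + c <= exp c at c = u/(1-u). *)
Lemma one_minus_ge_exp u : 0 <= u < 1 -> exp (- (u / (1 - u))) <= 1 - u.
Proof.
  intros Hu. rewrite exp_Ropp.
  pose proof (exp_ineq1_le (u / (1 - u))) as Htan.
  assert (Hinv : 1 + u / (1 - u) = / (1 - u)) by (field; lra).
  rewrite Hinv in Htan.
  apply Rle_trans with (/ / (1 - u)); [| rewrite Rinv_inv; lra].
  apply Rinv_le_contravar; [apply Rinv_0_lt_compat; lra | exact Htan].
Qed.

Lemma pow_one_minus_ge_exp u n : 0 <= u < 1 ->
  exp (- (INR n * (u / (1 - u)))) <= (1 - u) ^ n.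
Proof.
  intros Hu. replace (- (INR n * (u / (1 - u)))) with (INR n * - (u / (1 - u))) by ring.
  rewrite exp_nmul. apply pow_incr. split; [left; apply exp_pos | apply one_minus_ge_exp; auto].
Qed.

Lemma exp_tangent a y : exp (- a) * (1 + a - y) <= exp (- y).
Proof.
  replace (- y) with (- a + (a - y)) by ring. rewrite exp_plus.
  pose proof (exp_ineq1_le (a - y)). pose proof (exp_pos (- a)). nra.
Qed.

Lemma pow_antimono t m n : 0 <= t <= 1 -> (m <= n)%nat -> t ^ n <= t ^ m.
Proof.
  intros Ht Hmn. replace n with (m + (n - m))%nat by lia. rewrite pow_add.
  assert (0 <= t ^ m) by (apply pow_le; lra).
  pose proof (pow_unit_interval t (n - m) Ht). nra.
Qed.

Section Estimate.

Variables (n : nat) (x : R).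
Hypothesis n_ge_16 : (16 <= n)%nat.
Hypothesis x_pos : 0 < x.
Hypothesis x_small : x * x < INR n * ln 2.

Let N := INR n.
(* With q = (1 + x/N)^{-1}, the probability of zero pebbles on a vertex is 1-q = t. *)
Let t := x / (N + x).

(* The size bound n >= 16 gives x < N/4 and n >= 2, used in [all_ones_prob_small]. *)
Lemma N_ge_16 : 16 <= N.
Proof. unfold N. replace 16 with (INR 16) by (simpl; lra). apply le_INR; auto. Qed.

Lemma t_bounds : 0 < t < 1.
Proof.
  pose proof N_ge_16. unfold t. split; [apply Rdiv_lt_0_compat; lra |].
  apply (Rmult_lt_reg_r (N + x)); [lra |]. field_simplify; lra.
Qed.

Lemma no_double_prob_large : 1 / 2 + x * ln 2 / (N + 2 * x) < (1 - t ^ 2) ^ n.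
Proof.
  pose proof N_ge_16. pose proof ln2_bounds. pose proof t_bounds.
  change (INR n) with N in x_small.
  set (y := x * x / (N + 2 * x)).
  assert (Hy : N * (t ^ 2 / (1 - t ^ 2)) = y).
  { unfold y, t. simpl. field. split; [lra |]. split; [lra |]. nra. }
  assert (Hexp : exp (- y) <= (1 - t ^ 2) ^ n).
  { rewrite <- Hy. apply pow_one_minus_ge_exp. simpl. nra. }
  pose proof (exp_tangent (ln 2) y) as Htan.
  rewrite exp_Ropp, exp_ln in Htan by lra.
  assert (Hmargin : 2 * x * ln 2 / (N + 2 * x) < ln 2 - y).
  { unfold y. apply (Rmult_lt_reg_r (N + 2 * x)); [lra |]. field_simplify; lra. }
  assert (E : 2 * x * ln 2 / (N + 2 * x) = 2 * (x * ln 2 / (N + 2 * x))) by (field; lra).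
  lra.
Qed.

Lemma all_ones_prob_small : ((1 - t) * t) ^ n <= x * ln 2 / (N + 2 * x).
Proof.
  pose proof N_ge_16. pose proof ln2_bounds. pose proof t_bounds.
  change (INR n) with N in x_small.
  assert (Hx : x < N / 4) by nra.
  assert (Hpow : ((1 - t) * t) ^ n <= t ^ 2).
  { apply Rle_trans with (t ^ n); [apply pow_incr; nra |].
    apply pow_antimono; [lra | lia]. }
  assert (Ht2 : t ^ 2 <= x * x / (N * N)).
  { unfold t. simpl. rewrite Rmult_1_r.
    apply (Rmult_le_reg_r ((N + x) * (N + x) * (N * N))); [repeat apply Rmult_lt_0_compat; lra |].
    field_simplify; try lra. nra. }
  assert (Hfinal : x * x / (N * N) <= x * ln 2 / (N + 2 * x)).
  { apply (Rmult_le_reg_r ((N * N) * (N + 2 * x))); [nra |]. field_simplify; try lra.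
    assert (x * (N + 2 * x) <= ln 2 * (N * N)) by nra. nra. }
  lra.
Qed.

Lemma solvable_bound_below_half :
  let q := / (1 + x / INR n) in
  1 - (1 - (1 - q) ^ 2) ^ n + (q * (1 - q)) ^ n < 1 / 2.
Proof.
  intros q. pose proof N_ge_16.
  assert (Hq : 1 - q = t) by (unfold q, t, N in *; field; repeat split; lra).
  rewrite Hq. replace q with (1 - t) by lra.
  pose proof no_double_prob_large. pose proof all_ones_prob_small. lra.
Qed.

End Estimate.

Theorem theorem26 :
  exists n1 : nat, (1 <= n1)%nat /\
    forall (n : nat) (adj : nat -> nat -> Prop),
      (n1 <= n)%nat -> simple_graph n adj ->
      forall x : R, is_geom_threshold n adj x -> sqrt (INR n * ln 2) <= x.
Proof.
  exists 16%nat. split; [lia |].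
  intros n adj Hn _ x [Hx [_ Hlub]].
  destruct (Rle_lt_dec (sqrt (INR n * ln 2)) x) as [Hle | Hlt]; auto. exfalso.
  pose proof (N_ge_16 n Hn) as HN. pose proof ln2_bounds.
  assert (Hx2 : x * x < INR n * ln 2).
  { pose proof (sqrt_sqrt (INR n * ln 2) ltac:(nra)). nra. }
  set (q := / (1 + x / INR n)).
  assert (Hq : 0 < q <= 1).
  { assert (0 < x / INR n) by (apply Rdiv_lt_0_compat; lra).
    unfold q. split; [apply Rinv_0_lt_compat; lra |].
    rewrite <- Rinv_1. apply Rinv_le_contravar; lra. }
  assert (Hhalf : 1 / 2 <= 1 - (1 - (1 - q) ^ 2) ^ n + (q * (1 - q)) ^ n).
  { apply Hlub. intros s [L [HL [HF ->]]]. apply (solvable_sum_bound n adj); auto. }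
  pose proof (solvable_bound_below_half n x Hn Hx Hx2) as Hbelow. cbv zeta in Hbelow.
  fold q in Hbelow. lra.
Qed.
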